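(* Let $\bm G\in\{0,1\}^{n\times k}$ be a partition indicator matrix, $\bm\Omega\in[0,1]^{k\times k}$ symmetric, $\bm n_g=\bm G^\top\bm1$, $\bm N_g=\operatorname{diag}(\bm n_g)=\bm G^\top\bm G$, and assume all entries of $\bm\Omega\bm n_g$ are positive. Define the normalized affinity matrix $$\bm\Gamma=\bm N_g^{1/2}\operatorname{diag}(\bm\Omega\bm n_g)^{-1/2}\,\bm\Omega\,\operatorname{diag}(\bm\Omega\bm n_g)^{-1/2}\bm N_g^{1/2},$$ and let $\bm{\mathcal L}=\operatorname{diag}(\bm{\mathcal A}\bm1)^{-1/2}\bm{\mathcal A}\operatorname{diag}(\bm{\mathcal A}\bm1)^{-1/2}$ with $\bm{\mathcal A}=\bm G\bm\Omega\bm G^\top$. If $\bm u_i$ is an eigenvector of $\bm\Gamma$ with eigenvalue $\lambda_i$, then $\bm v_i=\bm G\bm N_g^{-1/2}\bm u_i$ is an eigenvector of $\bm{\mathcal L}$ with the same eigenvalue $\lambda_i$.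
   Context: A partition indicator matrix $\bm G$ has exactly one entry $1$ in each row and each column nonzero ($G_{ij}=1$ iff node $i$ is in group $j$). $\bm1$ is the all-ones vector and $\operatorname{diag}(\bm x)$ the diagonal matrix with diagonal $\bm x$. *)

From HB Require Import structures.
From mathcomp Require Import all_boot all_order all_algebra.
Set Implicit Arguments. Unset Strict Implicit. Unset Printing Implicit Defensive.
Import Order.TTheory GRing.Theory Num.Theory.
Local Open Scope ring_scope.

Definition partition_indicator (R : nzRingType) (n k : nat) (G : 'M[R]_(n, k)) : Prop :=
  (forall i j, G i j = 0 \/ G i j = 1) /\
  (forall i, exists! j, G i j = 1) /\
  (forall j, exists i, G i j != 0).

Definition ones (R : nzRingType) (m : nat) : 'cV[R]_m := const_mx 1.

Definition diagc (R : nzRingType) (m : nat) (x : 'cV[R]_m) : 'M[R]_m := diag_mx x^T.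

Definition sqrtc (R : rcfType) (m : nat) (x : 'cV[R]_m) : 'cV[R]_m :=
  \col_i Num.sqrt (x i 0).
Definition invsqrtc (R : rcfType) (m : nat) (x : 'cV[R]_m) : 'cV[R]_m :=
  \col_i (Num.sqrt (x i 0))^-1.

Definition is_eigenvector (R : nzRingType) (m : nat) (M : 'M[R]_m) (u : 'cV[R]_m)
  (lambda : R) : Prop := u != 0 /\ M *m u = lambda *: u.

Section Defs.
Variables (R : rcfType) (n k : nat) (G : 'M[R]_(n, k)) (Omega : 'M[R]_k).

Definition n_g : 'cV[R]_k := G^T *m ones R n.

Definition Gamma_mx : 'M[R]_k :=
  diagc (sqrtc n_g) *m diagc (invsqrtc (Omega *m n_g)) *m Omega
    *m diagc (invsqrtc (Omega *m n_g)) *m diagc (sqrtc n_g).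

Definition A_mx : 'M[R]_n := G *m Omega *m G^T.

Definition L_mx : 'M[R]_n :=
  diagc (invsqrtc (A_mx *m ones R n)) *m A_mx *m diagc (invsqrtc (A_mx *m ones R n)).

End Defs.

From HB Require Import structures.
From mathcomp Require Import all_boot all_order all_algebra.
Import Order.TTheory GRing.Theory Num.Theory.
Local Open Scope ring_scope.
Set Implicit Arguments. Unset Strict Implicit.

(* Writing G as the indicator matrix of the node-to-group map g, G^T G = N_g and
   diag(G x) G = G diag(x), while A 1 = G (Omega n_g).  These identities give
   L (G N_g^{-1/2}) = (G N_g^{-1/2}) Gamma, and G N_g^{-1/2} has the left
   inverse N_g^{-1/2} G^T, so it maps eigenvectors of Gamma to eigenvectors
   of L with the same eigenvalue. *)

Lemma is_eigenvector_intertwine (R : comNzRingType) m p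
    (A : 'M[R]_m) (B : 'M[R]_p) (P : 'M[R]_(m, p)) (Q : 'M[R]_(p, m))
    (u : 'cV[R]_p) (lambda : R) :
  Q *m P = 1%:M -> A *m P = P *m B ->
  is_eigenvector B u lambda -> is_eigenvector A (P *m u) lambda.
Proof.
move=> QP1 AP [u_neq0 Bu]; split.
  apply: contra u_neq0 => /eqP Pu0.
  by rewrite -[u]mul1mx -QP1 -mulmxA Pu0 mulmx0.
by rewrite mulmxA AP -mulmxA Bu scalemxAr.
Qed.

Definition indicator_mx (R : nzRingType) n k (g : 'I_n -> 'I_k) : 'M[R]_(n, k) :=
  \matrix_(i, j) (j == g i)%:R.

Lemma partition_indicatorP (R : nzRingType) n k (G : 'M[R]_(n, k)) :
  partition_indicator G ->
  exists2 g : 'I_n -> 'I_k, G = indicator_mx R g & forall j, exists i, g i = j.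
Proof.
move=> [G01 [G_row G_col]].
have /fin_all_exists [g Gg1] : forall i, exists j, G i j = 1.
  by move=> i; have [j [Gij _]] := G_row i; exists j.
have G_indicator : G = indicator_mx R g.
  apply/matrixP => i j; rewrite mxE.
  have [-> // | neq_j] := eqVneq j (g i).
  have [j0 [_ uniq_i]] := G_row i.
  case: (G01 i j) => // Gij1.
  by case/eqP: neq_j; rewrite -(uniq_i _ Gij1) -(uniq_i _ (Gg1 i)).
exists g => // j; have [i] := G_col j.
rewrite G_indicator mxE; have [-> | _] := eqVneq j (g i); last by rewrite eqxx.
by exists i.
Qed.

Lemma diagc_mul (R : nzRingType) m (x y : 'cV[R]_m) :
  diagc x *m diagc y = diagc (\col_i (x i 0 * y i 0)).
Proof.
apply/matrixP => i j; rewrite /diagc mul_diag_mx !mxE.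
by have [-> | _] := eqVneq i j; rewrite ?mulr1n ?mulr0n ?mulr0.
Qed.

Section SqrtDiagonal.
Variables (R : rcfType) (m : nat) (x : 'cV[R]_m).

Lemma diagc_invsqrtc_sqrtc : (forall i, 0 < x i 0) ->
  diagc (invsqrtc x) *m diagc (sqrtc x) = 1%:M.
Proof.
move=> x_gt0; rewrite diagc_mul /diagc -diag_const_mx -trmx_const.
by congr (diag_mx _^T); apply/matrixP => i j; rewrite !mxE mulVf // sqrtr_eq0 -ltNge.
Qed.

Lemma diagc_mul_invsqrtc : (forall i, 0 <= x i 0) ->
  diagc x *m diagc (invsqrtc x) = diagc (sqrtc x).
Proof.
move=> x_ge0; rewrite diagc_mul; congr diagc; apply/matrixP => i j.
rewrite !mxE -{1}(sqr_sqrtr (x_ge0 i)) expr2 -mulrA.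
have [-> | sqrt_neq0] := eqVneq (Num.sqrt (x i 0)) 0; first by rewrite mul0r.
by rewrite mulfV // mulr1.
Qed.

End SqrtDiagonal.

Section IndicatorMatrix.
Variables (R : nzRingType) (n k : nat) (g : 'I_n -> 'I_k).
Local Notation G := (indicator_mx R g).

Lemma indicator_mulmx p (x : 'M[R]_(k, p)) : G *m x = \matrix_(i, j) x (g i) j.
Proof.
apply/matrixP => i j; rewrite !mxE (bigD1 (g i)) //= big1 ?addr0.
  by rewrite mxE eqxx mul1r.
by move=> l /negPf neq_l; rewrite mxE neq_l mul0r.
Qed.

Lemma tr_indicator_mul_indicator : G^T *m G = diagc (G^T *m ones R n).
Proof.
apply/matrixP => j l; rewrite /diagc !mxE.
have [<- | neq_jl] := eqVneq j l; rewrite ?mulr1n ?mulr0n.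
  by apply: eq_bigr => i _; rewrite !mxE mulr1; case: (j == g i); rewrite ?mulr1 ?mul0r.
apply: big1 => i _; rewrite !mxE.
have [j_gi | _] := eqVneq j (g i); last by rewrite mul0r.
by subst j; rewrite eq_sym (negPf neq_jl) mulr0.
Qed.

Lemma diagc_indicator_mul (x : 'cV[R]_k) : diagc (G *m x) *m G = G *m diagc x.
Proof.
apply/matrixP => i j; rewrite /diagc mul_diag_mx mul_mx_diag indicator_mulmx !mxE.
by have [-> | _] := eqVneq j (g i); rewrite ?mulr1 ?mul1r ?mulr0 ?mul0r.
Qed.

Lemma tr_indicator_mul_diagc (x : 'cV[R]_k) : G^T *m diagc (G *m x) = diagc x *m G^T.
Proof.
apply/matrixP => j i; rewrite /diagc mul_diag_mx mul_mx_diag indicator_mulmx !mxE.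
by have [-> | _] := eqVneq j (g i); rewrite ?mulr1 ?mul1r ?mulr0 ?mul0r.
Qed.

End IndicatorMatrix.

Section NormalizedAffinity.
Variables (R : rcfType) (n k : nat) (g : 'I_n -> 'I_k) (Omega : 'M[R]_k).
Hypothesis g_surj : forall j, exists i, g i = j.
Local Notation G := (indicator_mx R g).
Local Notation Ds := (diagc (sqrtc (n_g G))).
Local Notation Dis := (diagc (invsqrtc (n_g G))).
Local Notation Did := (diagc (invsqrtc (Omega *m n_g G))).

Lemma n_g_indicator_gt0 j : 0 < n_g G j 0.
Proof.
have [i gij] := g_surj j.
rewrite /n_g mxE (bigD1 i) //= ltr_pwDl ?sumr_ge0 // => [|l _];
  by rewrite !mxE ?gij ?eqxx mulr1 ?ler0n ?ltr01.
Qed.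

Lemma invsqrtc_indicator_mul (x : 'cV[R]_k) : invsqrtc (G *m x) = G *m invsqrtc x.
Proof. by apply/matrixP => i j; rewrite /invsqrtc !indicator_mulmx !mxE. Qed.

Lemma L_mx_indicator : L_mx G Omega = G *m Did *m Omega *m Did *m G^T.
Proof.
have A1 : A_mx G Omega *m ones R n = G *m (Omega *m n_g G) by rewrite !mulmxA.
rewrite /L_mx A1 invsqrtc_indicator_mul /A_mx -!mulmxA tr_indicator_mul_diagc.
by rewrite !mulmxA diagc_indicator_mul.
Qed.

Lemma n_g_mul_invsqrtc : diagc (n_g G) *m Dis = Ds.
Proof. by apply: diagc_mul_invsqrtc => j; exact: ltW (n_g_indicator_gt0 j). Qed.

Lemma indicator_invsqrt_left_inverse : Dis *m G^T *m (G *m Dis) = 1%:M.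
Proof.
rewrite mulmxA -(mulmxA Dis) tr_indicator_mul_indicator -/(n_g G).
by rewrite -mulmxA n_g_mul_invsqrtc; apply: diagc_invsqrtc_sqrtc; exact: n_g_indicator_gt0.
Qed.

Lemma L_mx_intertwines_Gamma_mx :
  L_mx G Omega *m (G *m Dis) = G *m Dis *m Gamma_mx G Omega.
Proof.
have DisDs : Dis *m Ds = 1%:M by apply/diagc_invsqrtc_sqrtc/n_g_indicator_gt0.
rewrite L_mx_indicator /Gamma_mx -!mulmxA (mulmxA G^T) tr_indicator_mul_indicator.
by rewrite -/(n_g G) (mulmxA (diagc _)) n_g_mul_invsqrtc DisDs mul1mx.
Qed.

End NormalizedAffinity.

Theorem lemmaA2 (R : rcfType) (n k : nat) (G : 'M[R]_(n, k)) (Omega : 'M[R]_k)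
    (u : 'cV[R]_k) (lambda : R) :
  partition_indicator G ->
  Omega^T = Omega ->
  (forall i j, 0 <= Omega i j <= 1) ->
  (forall i, 0 < (Omega *m n_g G) i 0) ->
  is_eigenvector (Gamma_mx G Omega) u lambda ->
  is_eigenvector (L_mx G Omega) (G *m diagc (invsqrtc (n_g G)) *m u) lambda.
Proof.
move=> /partition_indicatorP [g -> g_surj] _ _ _.
apply: is_eigenvector_intertwine.
- exact: indicator_invsqrt_left_inverse.
- exact: L_mx_intertwines_Gamma_mx.
Qed.
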